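(* Let $A$ be a Boolean algebra and $g\colon A^2\to A$ a binary sufficiency operator satisfying (ABTW): for all $a\in A$, $a\neq0\Rightarrow g(a,a)\leq a$. Let $a,b\in A$. If $g(a,b)\neq0$, then $a\cdot b\leq g(a,b)$. If, additionally, $a\cdot b\neq0$, then $g(a,b)=a\cdot b$ and $a\cdot b$ is an atom of $A$.
   Context: $A$ is a Boolean algebra with at least two elements (operations $+,\cdot,-,0,1$). A binary sufficiency operator is a map $g\colon A^2\to A$ with $g(x,y)=1$ whenever $x=0$ or $y=0$, and co-additive in each argument: $g(x+x',y)=g(x,y)\cdot g(x',y)$ and $g(x,y+y')=g(x,y)\cdot g(x,y')$ (hence $g$ is antitone in each argument). *)

From mathcomp Require Import all_boot all_order.
Set Implicit Arguments. Unset Strict Implicit. Unset Printing Implicit Defensive.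
Import Order.TTheory.
Local Open Scope order_scope.

(* A Boolean algebra is modelled by a complemented distributive lattice with
   top and bottom (ctbDistrLatticeType): + is `|`, . is `&`, - is ~`,
   0 is \bot, 1 is \top, <= is the lattice order. *)

Definition sufficiency_op (d : Order.disp_t) (A : ctbDistrLatticeType d)
  (g : A -> A -> A) : Prop :=
  (forall y : A, g \bot y = \top) /\
  (forall x : A, g x \bot = \top) /\
  (forall x x' y : A, g (x `|` x') y = g x y `&` g x' y) /\
  (forall x y y' : A, g x (y `|` y') = g x y `&` g x y').

Definition ABTW (d : Order.disp_t) (A : ctbDistrLatticeType d)
  (g : A -> A -> A) : Prop :=
  forall a : A, a != \bot -> g a a <= a.

Definition atom (d : Order.disp_t) (A : ctbDistrLatticeType d) (x : A) : Prop :=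
  x != \bot /\ (forall y : A, y <= x -> y = \bot \/ y = x).

(* Antitonicity and (ABTW) give g(a,b) <= g(x,x) <= x for every nonzero x
   below both a and b.  For x = a . b . -g(a,b) this would force
   g(a,b) <= -g(a,b), i.e. g(a,b) = 0; so if g(a,b) != 0 that x is 0, which
   says a . b <= g(a,b).  For x = a . b we get the reverse inequality, and for
   any nonzero y <= a . b the chain a . b <= g(a,b) <= y shows y = a . b. *)

From mathcomp Require Import all_boot all_order.
Import Order.Theory.
Local Open Scope order_scope.

Section SufficiencyOperator.

Context {d : Order.disp_t} {A : ctbDistrLatticeType d} {g : A -> A -> A}.
Hypothesis hg : sufficiency_op g.

Lemma sufficiency_op_le2 {x x' y y'} : x <= x' -> y <= y' -> g x' y' <= g x y.
Proof.
case: hg => _ [_ [gUl gUr]] le_xx' le_yy'.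
have le_gl : g x' y' <= g x y' by rewrite -(join_r le_xx') gUl leIl.
have le_gr : g x y' <= g x y by rewrite -(join_r le_yy') gUr leIl.
exact: le_trans le_gl le_gr.
Qed.

Hypothesis habtw : ABTW g.

Lemma ABTW_le_lower_bound {a b x} : x != \bot -> x <= a -> x <= b -> g a b <= x.
Proof.
move=> x_nz le_xa le_xb.
exact: le_trans (sufficiency_op_le2 le_xa le_xb) (habtw x x_nz).
Qed.

Lemma ABTW_le_meet {a b} : a `&` b != \bot -> g a b <= a `&` b.
Proof. by move=> ab_nz; apply: ABTW_le_lower_bound; rewrite ?leIl ?leIr. Qed.

Lemma meet_le_ABTW {a b} : g a b != \bot -> a `&` b <= g a b.
Proof.
move=> gab_nz; rewrite -[g a b]complK -disj_leC; apply: contraNT gab_nz => x_nz.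
have le_gx : g a b <= a `&` b `&` ~` g a b.
  by apply: ABTW_le_lower_bound; rewrite // -meetA ?leIl // meetCA leIl.
have : g a b <= ~` g a b := le_trans le_gx (leIr _ _).
by rewrite -disj_leC meetxx.
Qed.

Lemma ABTW_meet_atom {a b} :
  g a b != \bot -> a `&` b != \bot -> atom (a `&` b).
Proof.
move=> gab_nz ab_nz; split=> // y le_y_ab.
have [-> | y_nz] := eqVneq y \bot; [by left | right].
apply/eqP; rewrite eq_le le_y_ab (le_trans (meet_le_ABTW gab_nz)) //.
by apply: ABTW_le_lower_bound; rewrite // (le_trans le_y_ab) ?leIl ?leIr.
Qed.

End SufficiencyOperator.

Theorem theorem32 (d : Order.disp_t) (A : ctbDistrLatticeType d)
  (nontriv : (\bot : A) != \top)
  (g : A -> A -> A) (hg : sufficiency_op g) (habtw : ABTW g) (a b : A) :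
  g a b != \bot ->
  (a `&` b <= g a b) /\
  (a `&` b != \bot -> g a b = a `&` b /\ atom (a `&` b)).
Proof.
move=> gab_nz; have le_ab_g := meet_le_ABTW hg habtw gab_nz.
split=> // ab_nz; split.
  by apply/eqP; rewrite eq_le le_ab_g ABTW_le_meet.
exact: (ABTW_meet_atom hg habtw gab_nz ab_nz).
Qed.
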